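(* Let $F \in S$ be a homogeneous form of degree $d$ and $\alpha\in T_1$ a linear form. If $\mathrm{al}(F) - \mathrm{al}(\alpha\circ F) > \mathrm{al}(\alpha\circ F) - \mathrm{al}(\alpha^2\circ F)$, then $r(F) > \mathrm{al}(\alpha\circ F) - \mathrm{al}(\alpha^2\circ F)$.
   Context: $S=\mathbb{C}[x_1,\dots,x_n]$, $T=\mathbb{C}[\alpha_1,\dots,\alpha_n]$ acting on $S$ by $\alpha_i\mapsto\partial/\partial x_i$ (written $\Theta\circ F$). $\mathrm{al}(G)=\dim_{\mathbb{C}}\{\Theta\circ G:\Theta\in T\}$ is the apolar length. $r(F)$ is the Waring rank: the least $r$ with $F=\sum_{i=1}^r c_i\ell_i^d$ for linear forms $\ell_i$ and scalars $c_i$. *)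

From HB Require Import structures.
From mathcomp Require Import all_boot all_order all_algebra.
Set Implicit Arguments. Unset Strict Implicit. Unset Printing Implicit Defensive.
Import GRing.Theory.
Local Open Scope ring_scope.

(* Polynomials in n variables x_0..x_(n-1) over a field K, in which every
   variable occurs with exponent at most D.  For a form of degree d we take
   D = d: such a form, all its partial derivatives and all powers l^d of
   linear forms live in this finite-dimensional space, and all the operations
   below are exact there. *)

Definition mono (n D : nat) := {ffun 'I_n -> 'I_D.+1}.

Definition pol (K : fieldType) (n D : nat) := {ffun mono n D -> K^o}.

Definition mdeg n D (m : mono n D) : nat := \sum_(i < n) (m i : nat).

Definition homogeneous (K : fieldType) (n D : nat) (P : pol K n D) (d : nat) : Prop :=
  forall m, P m != 0 -> mdeg m = d.

(* the monomial m * x_i (only used when (m i) < D) *)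
Definition incr n D (m : mono n D) (i : 'I_n) : mono n D :=
  [ffun j => if j == i then inord (m j).+1 else m j].

Definition pderiv (K : fieldType) (n D : nat) (i : 'I_n) (P : pol K n D) : pol K n D :=
  [ffun m : mono n D => if (m i < D)%N then (m i).+1%:R * P (incr m i) else 0].

(* iterated derivative d^a = prod_i (d/dx_i)^(a_i), i.e. the action of the
   monomial alpha^a of T *)
Definition dmono (K : fieldType) (n D : nat) (a : mono n D) (P : pol K n D) : pol K n D :=
  foldr (fun i Q => iter (a i) (pderiv i) Q) P (enum 'I_n).

(* action of a linear form alpha = sum_i a_i alpha_i of T_1 *)
Definition lin_act (K : fieldType) (n D : nat) (a : 'I_n -> K) (P : pol K n D) : pol K n D :=
  \sum_(i < n) a i *: pderiv i P.

(* apolar length: dimension of the space of all derivatives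
   {Theta o G : Theta in T}, spanned by the monomial derivatives
   (derivatives of order > D in some variable vanish on this space) *)
Definition al (K : fieldType) (n D : nat) (P : pol K n D) : nat :=
  \dim (span [seq dmono a P | a <- enum {: mono n D}]).

(* polynomial multiplication (exact when the product has exponents <= D) *)
Definition mulp (K : fieldType) (n D : nat) (P Q : pol K n D) : pol K n D :=
  [ffun m : mono n D => \sum_(a : mono n D) \sum_(b : mono n D |
               [forall i, ((a i : nat) + b i == m i)%N]) P a * Q b].

Definition onep (K : fieldType) (n D : nat) : pol K n D :=
  [ffun m : mono n D => if [forall i, (m i : nat) == 0%N] then 1 else 0].

Definition linp (K : fieldType) (n D : nat) (l : 'I_n -> K) : pol K n D :=
  [ffun m : mono n D => \sum_(j < n) if [forall i, (m i : nat) == (i == j)] then l j else 0].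

Definition powp (K : fieldType) (n D : nat) (P : pol K n D) (k : nat) : pol K n D :=
  iter k (mulp P) (@onep K n D).

Definition waring_decomp (K : fieldType) (n d : nat) (F : pol K n d) (r : nat) : Prop :=
  exists (c : 'I_r -> K) (l : 'I_r -> 'I_n -> K),
    F = \sum_(i < r) c i *: powp (@linp K n d (l i)) d.

Definition waring_rank (K : fieldType) (n d : nat) (F : pol K n d) (r : nat) : Prop :=
  waring_decomp F r /\ forall r', waring_decomp F r' -> (r <= r')%N.

(* Write F = sum_i c_i l_i^d.  Every derivative of F is sum_i sum_k v_ik l_i^(d-k)
   for a coefficient matrix v, and alpha acts on such matrices as the shift
   v_ik |-> alpha(l_i) v_i(k-1).  The matrices coming from the derivatives of F
   form a shift-stable space E; if alpha(l_i) != 0 whenever c_i != 0, a kernel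
   vector of the shift on E lives in the last column of the rows with c_i != 0,
   so rank-nullity gives al F - al (alpha o F) <= r.  Otherwise alpha kills a
   summand, alpha o F = sum_i d alpha(l_i) c_i l_i^(d-1) has fewer than r nonzero
   terms, and the same bound applied to alpha o F gives
   al (alpha o F) - al (alpha^2 o F) < r. *)

From HB Require Import structures.
From mathcomp Require Import all_boot all_order all_algebra.
From mathcomp Require Import ring zify.
Set Implicit Arguments. Unset Strict Implicit. Unset Printing Implicit Defensive.
Import GRing.Theory.
Local Open Scope ring_scope.

Lemma ffactnD k b c : (k ^_ (b + c) = k ^_ c * (k - c) ^_ b)%N.
Proof.
elim: b => [|b IH]; first by rewrite ffactn0 muln1.
by rewrite addSn ffactnSr IH ffactnSr mulnA -subnDA [(c + b)%N]addnC.
Qed.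

Lemma iter_linear (R : pzRingType) (V : lmodType R) (f : {linear V -> V}) k :
  linear (iter k f).
Proof. by move=> c u v; elim: k => //= k ->; rewrite linearP. Qed.
HB.instance Definition _ (R : pzRingType) (V : lmodType R) (f : {linear V -> V}) k :=
  GRing.isLinear.Build R V V *:%R (iter k f) (iter_linear f k).

Lemma sum_ord_eq_nat (V : nmodType) e (F : 'I_e.+1 -> V) (p : nat) :
  \sum_(k : 'I_e.+1) (if (k : nat) == p then F k else 0) =
  if (p <= e)%N then F (inord p) else 0.
Proof.
case: leqP => pe.
  rewrite (bigD1 (inord p)) //= inordK // eqxx big1 ?addr0 // => k kp.
  case: eqP => // kp'; move: kp; suff -> : k = inord p by rewrite eqxx.
  by apply/val_inj; rewrite /= inordK.
rewrite big1 // => k _; case: eqP => // kp.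
by move: (ltn_ord k); rewrite kp ltnS leqNgt pe.
Qed.

Lemma dim_limg_le_ker (K : fieldType) (vT wT : vectType K)
    (f : 'End(vT)) (g : 'Hom(vT, wT)) (E : {vspace vT}) :
  (f @: E <= E)%VS ->
  (\dim (g @: E) <= \dim (g @: (f @: E)) + \dim (E :&: lker f))%N.
Proof.
move=> fE; have := limg_ker_dim g E; have := limg_ker_dim g (f @: E).
have := limg_ker_dim f E; have := dimvS (capvS fE (subvv (lker g))).
lia.
Qed.

Section Monomials.
Variables n D : nat.
Implicit Types (m : mono n D) (j : 'I_n).

Lemma incrE m j i : (m j < D)%N -> (incr m j i : nat) = (m i + (i == j))%N.
Proof.
move=> lt; rewrite /incr ffunE; case: eqP => [->|_]; last by rewrite addn0.
by rewrite inordK ?addn1 // ltnS.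
Qed.

Lemma mdeg_incr m j : (m j < D)%N -> mdeg (incr m j) = (mdeg m).+1.
Proof.
move=> lt; rewrite /mdeg (bigD1 j) //= [in RHS](bigD1 j) //= incrE // eqxx addn1 addSn.
congr (_.+1 + _)%N; apply: eq_bigr => i /negbTE ij; by rewrite incrE // ij addn0.
Qed.

Lemma leq_mono_mdeg m j : (m j <= mdeg m)%N.
Proof. by rewrite /mdeg (bigD1 j) //= leq_addr. Qed.

Lemma mdeg_eq0 m : (mdeg m == 0%N) = [forall i, (m i : nat) == 0%N].
Proof. by rewrite /mdeg sum_nat_eq0; apply/forallP/forallP => H i; move: (H i). Qed.

Definition decr m j : mono n D := [ffun i => if i == j then inord (m i).-1 else m i].

Lemma decrE m j : (0 < m j)%N -> (decr m j j : nat) = (m j).-1.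
Proof. by move=> mj0; rewrite ffunE eqxx inordK // (leq_ltn_trans (leq_pred _)). Qed.

Lemma decr_lt m j : (0 < m j)%N -> (decr m j j < D)%N.
Proof. by move=> mj0; rewrite decrE // -ltnS prednK // ltn_ord. Qed.

Lemma decrK m j : (0 < m j)%N -> incr (decr m j) j = m.
Proof.
move=> mj0; apply/ffunP => i; apply/val_inj => /=; rewrite incrE ?decr_lt //.
case: eqP => [->|/eqP ij]; first by rewrite decrE // addn1 prednK.
by rewrite ffunE (negbTE ij) addn0.
Qed.

Definition unit_mono j : mono n D := [ffun i => inord (i == j)].

Lemma unit_monoE (D0 : (0 < D)%N) j i : (unit_mono j i : nat) = (i == j).
Proof. by rewrite ffunE inordK // ltnS; case: (i == j). Qed.

End Monomials.

Section PowersOfLinearForms.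
Variables (K : fieldType) (n D : nat).
Hypothesis char0 : [pchar K] =i pred0.
Implicit Types (m : mono n D) (l a : 'I_n -> K) (j : 'I_n).

Lemma natf_neq0 k : (0 < k)%N -> (k%:R : K) != 0.
Proof. by move=> k0; have /pcharf0P -> := char0; rewrite -lt0n. Qed.

Definition meval l m : K := \prod_i l i ^+ (m i : nat).
Definition mfact m : K := \prod_i ((m i)`!)%:R.
Definition multinom m : K := (mdeg m)`!%:R / mfact m.

(* Multinomial expansion of (sum_j l_j x_j)^k. *)
Definition lpow l k : pol K n D :=
  [ffun m => if mdeg m == k then multinom m * meval l m else 0].

Lemma mfact_neq0 m : mfact m != 0.
Proof. by apply/prodf_neq0 => i _; apply: natf_neq0; apply: fact_gt0. Qed.

Lemma meval_incr l m j : (m j < D)%N -> meval l (incr m j) = meval l m * l j.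
Proof.
move=> lt; rewrite /meval (bigD1 j) //= [in RHS](bigD1 j) //= incrE // eqxx addn1.
rewrite (eq_bigr (fun i => l i ^+ (m i : nat))); first by rewrite exprS -mulrA mulrC.
by move=> i /negbTE ij; rewrite incrE // ij addn0.
Qed.

Lemma mfact_incr m j : (m j < D)%N -> mfact (incr m j) = mfact m * ((m j).+1)%:R.
Proof.
move=> lt; rewrite /mfact (bigD1 j) //= [in RHS](bigD1 j) //= incrE // eqxx addn1.
rewrite (eq_bigr (fun i => ((m i)`!)%:R)); first by rewrite factS natrM -mulrA mulrC.
by move=> i /negbTE ij; rewrite incrE // ij addn0.
Qed.

Lemma onep_lpow0 l : @onep K n D = lpow l 0.
Proof.
apply/ffunP => m; rewrite !ffunE mdeg_eq0; case: forallP => // m0.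
have {}m0 i : (m i : nat) = 0%N by apply/eqP.
rewrite /multinom /meval /mfact (_ : mdeg m = 0%N); last first.
  by apply/eqP; rewrite mdeg_eq0; apply/forallP => i; rewrite m0.
by rewrite fact0 !big1 ?divr1 ?mulr1 // => i _; rewrite m0 ?expr0.
Qed.

Lemma linpE (D0 : (0 < D)%N) l m :
  linp D l m = \sum_j (if m == unit_mono D j then l j else 0).
Proof.
rewrite ffunE; apply: eq_bigr => j _; congr (if _ then _ else _).
apply/forallP/eqP => [mj|->]; last by move=> i; rewrite unit_monoE.
by apply/ffunP => i; apply/val_inj; rewrite /= unit_monoE //; apply/eqP.
Qed.

Lemma mulp_linpE (D0 : (0 < D)%N) l (Q : pol K n D) m :
  mulp (linp D l) Q m = \sum_j (if (0 < m j)%N then l j * Q (decr m j) else 0).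
Proof.
rewrite ffunE.
transitivity (\sum_(b : mono n D) \sum_(c : mono n D | [forall i, ((b i : nat) + c i == m i)%N])
                \sum_j (if b == unit_mono D j then l j else 0) * Q c).
  by apply: eq_bigr => b _; apply: eq_bigr => c _; rewrite linpE // mulr_suml.
under eq_bigr => b _ do rewrite exchange_big /=.
rewrite exchange_big /=; apply: eq_bigr => j _.
rewrite (bigD1 (unit_mono D j)) //= [X in _ + X]big1 ?addr0; last first.
  by move=> b /negbTE bj; apply: big1 => c _; rewrite bj mul0r.
under eq_bigr => c _ do rewrite eqxx.
case: (posnP (m j)) => [mj0|mj0].
  rewrite big_pred0 // => c; apply/negbTE/negP => /forallP/(_ j)/eqP.
  by rewrite unit_monoE // eqxx mj0 add1n.
rewrite (big_pred1 (decr m j)) // => c; apply/forallP/eqP => [mE|-> i].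
  apply/ffunP => i; apply/val_inj; apply/eqP; rewrite -(eqn_add2l (i == j)).
  have := mE i; rewrite unit_monoE // => /eqP ->.
  by rewrite -{1}(decrK mj0) incrE ?decr_lt // addnC.
by rewrite unit_monoE // -{2}(decrK mj0) incrE ?decr_lt // addnC.
Qed.

Lemma linp_lpow_summand l k m j :
  (if (0 < m j)%N then l j * lpow l k (decr m j) else 0) =
  if mdeg m == k.+1 then (m j)%:R * (k`!%:R / mfact m) * meval l m else 0.
Proof.
case: (posnP (m j)) => [->|mj0]; first by rewrite !mul0r; case: ifP.
have mjD := decr_lt mj0; have mK := decrK mj0; rewrite ffunE.
set m' := decr m j in mjD mK *.
rewrite -mK mdeg_incr // eqSS mfact_incr // meval_incr // incrE // eqxx addn1.
case: eqP => [dk|]; last by rewrite mulr0.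
have := mfact_neq0 m'; have := natf_neq0 (ltn0Sn (m' j)).
by rewrite /multinom dk => h1 h2; field; rewrite addrC natr1 h1 h2.
Qed.

Lemma powp_linp l k : (k <= D)%N -> powp (linp D l) k = lpow l k.
Proof.
elim: k => [_|k IH kD]; first by rewrite /powp /= (onep_lpow0 l).
rewrite /powp iterS -/(powp _ k) IH ?(ltnW kD) //; apply/ffunP => m.
rewrite mulp_linpE ?(leq_ltn_trans _ kD) //.
under eq_bigr => j _ do rewrite linp_lpow_summand.
rewrite [RHS]ffunE; case: eqP => mk; last by rewrite big1.
rewrite -!mulr_suml -natr_sum -/(mdeg m) mk /multinom mk factS natrM; ring.
Qed.

Lemma pderiv_is_linear j : linear (@pderiv K n D j).
Proof.
move=> c P Q; apply/ffunP => m; rewrite !ffunE; case: ifP => _; last by rewrite scaler0 addr0.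
by rewrite mulrDr scalerAr.
Qed.
HB.instance Definition _ j :=
  GRing.isLinear.Build K (pol K n D) (pol K n D) *:%R (@pderiv K n D j) (pderiv_is_linear j).

Lemma pderiv_lpow l k j : (k <= D)%N -> pderiv j (lpow l k) = (k%:R * l j) *: lpow l k.-1.
Proof.
move=> kD; apply/ffunP => m; rewrite !ffunE; case: k kD => [|k] kD /=.
  by rewrite mul0r scale0r; case: ifP => // mjD; rewrite mdeg_incr // mulr0.
case: ifP => [mjD|/negbT]; last first.
  rewrite -leqNgt => Dmj; case: eqP => [mk|]; last by rewrite scaler0.
  by move: (leq_trans kD (leq_trans Dmj (leq_mono_mdeg m j))); rewrite mk ltnn.
rewrite /multinom mdeg_incr // mfact_incr // meval_incr // eqSS.
case: eqP => [mk|]; last by rewrite mulr0 scaler0.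
have := mfact_neq0 m; have := natf_neq0 (ltn0Sn (m j)) => h1 h2.
rewrite mk factS natrM /GRing.scale /=; field; by rewrite addrC natr1 h1 h2.
Qed.

Lemma iter_pderiv_lpow l k j p : (k <= D)%N ->
  iter p (pderiv j) (lpow l k) = ((k ^_ p)%:R * l j ^+ p) *: lpow l (k - p)%N.
Proof.
move=> kD; elim: p => [|p IH]; first by rewrite ffactn0 expr0 mulr1 scale1r subn0.
rewrite iterS IH linearZ /= pderiv_lpow ?(leq_trans (leq_subr _ _)) // scalerA subnS.
by rewrite ffactnSr natrM exprSr; congr (_ *: _); ring.
Qed.

Lemma dmono_lpow l k (b : mono n D) : (k <= D)%N ->
  dmono b (lpow l k) = ((k ^_ (mdeg b))%:R * meval l b) *: lpow l (k - mdeg b)%N.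
Proof.
move=> kD; rewrite /dmono /mdeg /meval -!big_enum /=.
elim: (enum 'I_n) => [|i s IH] /=; first by rewrite !big_nil ffactn0 mulr1 scale1r subn0.
rewrite IH linearZ /= iter_pderiv_lpow ?(leq_trans (leq_subr _ _)) //.
rewrite scalerA !big_cons -subnDA addnC ffactnD natrM; congr (_ *: _); ring.
Qed.

Lemma dmono_is_linear (b : mono n D) : linear (@dmono K n D b).
Proof. by move=> c P Q; rewrite /dmono; elim: (enum 'I_n) => //= i s ->; rewrite linearP. Qed.
HB.instance Definition _ b :=
  GRing.isLinear.Build K (pol K n D) (pol K n D) *:%R (@dmono K n D b) (dmono_is_linear b).

Lemma lin_act_is_linear a : linear (@lin_act K n D a).
Proof.
move=> c P Q; rewrite /lin_act scaler_sumr -big_split; apply: eq_bigr => i _.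
by rewrite linearP scalerDr !scalerA mulrC.
Qed.
HB.instance Definition _ a :=
  GRing.isLinear.Build K (pol K n D) (pol K n D) *:%R (@lin_act K n D a) (lin_act_is_linear a).

Definition lin_pair a l : K := \sum_i a i * l i.

Lemma lin_act_lpow a l k : (k <= D)%N ->
  lin_act a (lpow l k) = (k%:R * lin_pair a l) *: lpow l k.-1.
Proof.
move=> kD; rewrite /lin_act; under eq_bigr => i _ do rewrite pderiv_lpow // scalerA.
rewrite -scaler_suml; congr (_ *: _); rewrite /lin_pair mulr_sumr; apply: eq_bigr => i _; ring.
Qed.

End PowersOfLinearForms.

Section ApolarLengthDrop.
Variables (K : fieldType) (n D : nat).
Hypothesis char0 : [pchar K] =i pred0.
Variables (s e : nat) (c : 'I_s -> K) (l : 'I_s -> 'I_n -> K) (alpha : 'I_n -> K).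
Hypothesis eD : (e <= D)%N.

Definition waring_sum : pol K n D := \sum_i c i *: lpow D (l i) e.

(* Row i, column k of a coefficient matrix weighs the k-th derivative
   e(e-1)...(e-k+1) l_i^(e-k) of l_i^e. *)
Definition mx_pol (v : 'M[K]_(s, e.+1)) : pol K n D :=
  \sum_i \sum_(k : 'I_e.+1) (v i k * (e ^_ k)%:R) *: lpow D (l i) (e - k)%N.

Lemma mx_pol_is_linear : linear mx_pol.
Proof.
move=> x v w; rewrite /mx_pol scaler_sumr -big_split; apply: eq_bigr => i _ /=.
rewrite scaler_sumr -big_split; apply: eq_bigr => k _ /=.
by rewrite !mxE mulrDl scalerDl scalerA mulrA.
Qed.
HB.instance Definition _ :=
  GRing.isLinear.Build K 'M[K]_(s, e.+1) (pol K n D) *:%R mx_pol mx_pol_is_linear.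

Definition shift_mx (v : 'M[K]_(s, e.+1)) : 'M[K]_(s, e.+1) :=
  \matrix_(i, k) if (k : nat) == 0%N then 0 else lin_pair alpha (l i) * v i (inord k.-1).

Lemma shift_mx_is_linear : linear shift_mx.
Proof.
move=> x v w; apply/matrixP => i k; rewrite !mxE.
by case: eqP => _; [rewrite mulr0 addr0 | ring].
Qed.
HB.instance Definition _ :=
  GRing.isLinear.Build K 'M[K]_(s, e.+1) 'M[K]_(s, e.+1) *:%R shift_mx shift_mx_is_linear.

Definition coef_mx (b : mono n D) : 'M[K]_(s, e.+1) :=
  \matrix_(i, k) if (k : nat) == mdeg b then c i * meval (l i) b else 0.

Definition coef_space := <<[seq coef_mx b | b <- enum (mono n D)]>>%VS.

Lemma dmono_waring_sum b : dmono b waring_sum = mx_pol (coef_mx b).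
Proof.
rewrite /waring_sum /mx_pol linear_sum; apply: eq_bigr => i _ /=.
rewrite linearZ /= dmono_lpow //.
transitivity (\sum_(k : 'I_e.+1) (if (k : nat) == mdeg b then
     ((c i * meval (l i) b) * (e ^_ k)%:R) *: lpow D (l i) (e - k)%N else 0)).
  rewrite sum_ord_eq_nat; case: leqP => be.
    by rewrite inordK // scalerA; congr (_ *: _); ring.
  by rewrite ffact_small // mul0r scale0r scaler0.
by apply: eq_bigr => k _; rewrite mxE; case: eqP => _ //; rewrite mul0r scale0r.
Qed.

Lemma dmono_lin_act_waring_sum b :
  dmono b (lin_act alpha waring_sum) = mx_pol (shift_mx (coef_mx b)).
Proof.
rewrite /waring_sum /mx_pol [lin_act alpha _]linear_sum linear_sum; apply: eq_bigr => i _ /=.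
rewrite !linearZ /= lin_act_lpow // linearZ /= dmono_lpow ?(leq_trans (leq_pred e)) //.
transitivity (\sum_(k : 'I_e.+1) (if (k : nat) == (mdeg b).+1 then
     ((lin_pair alpha (l i) * (c i * meval (l i) b)) * (e ^_ k)%:R) *:
       lpow D (l i) (e - k)%N else 0)).
  rewrite sum_ord_eq_nat !scalerA; case: (leqP (mdeg b).+1 e) => be.
    rewrite inordK // ffactnS (_ : e.-1 - mdeg b = e - (mdeg b).+1)%N; last by lia.
    by congr (_ *: _); rewrite natrM; ring.
  have ez : (e%:R * (e.-1 ^_ mdeg b)%:R : K) = 0 by rewrite -natrM -ffactnS ffact_small.
  rewrite [X in X *: _](_ : _ = c i * lin_pair alpha (l i) * meval (l i) b * 0).
    by rewrite mulr0 scale0r.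
  by rewrite -ez; ring.
apply: eq_bigr => k _; rewrite /shift_mx /coef_mx !mxE.
have [->|k0] := eqVneq (k : nat) 0%N; first by rewrite mul0r scale0r.
rewrite inordK; last by move: (ltn_ord k); lia.
by case: eqP => kb; case: eqP => kb'; rewrite ?mulrA ?mulr0 ?mul0r ?scale0r //; lia.
Qed.

Lemma coef_mx_in b : coef_mx b \in coef_space.
Proof. by apply: memv_span; apply: map_f; rewrite mem_enum. Qed.

Lemma shift_coef_mx_in b : shift_mx (coef_mx b) \in coef_space.
Proof.
have [be|eb] := ltnP (mdeg b) e; last first.
  suff -> : shift_mx (coef_mx b) = 0 by apply: mem0v.
  apply/matrixP => i k; rewrite /shift_mx /coef_mx !mxE.
  have [//|k0] := eqVneq (k : nat) 0%N; rewrite inordK; last by move: (ltn_ord k); lia.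
  by case: eqP; rewrite ?mulr0 //; move: (ltn_ord k); lia.
have bD j : (b j < D)%N by apply: leq_ltn_trans (leq_mono_mdeg b j) (leq_trans be eD).
(* Below the top degree, shifting is multiplication of the monomial by alpha. *)
suff -> : shift_mx (coef_mx b) = \sum_j alpha j *: coef_mx (incr b j).
  by apply: rpred_sum => j _; apply: rpredZ; apply: coef_mx_in.
apply/matrixP => i k; rewrite summxE /shift_mx /coef_mx !mxE.
under eq_bigr => j _ do rewrite !mxE mdeg_incr // meval_incr //.
have [k0|k0] := eqVneq (k : nat) 0%N; first by rewrite big1 // => j _; rewrite k0 mulr0.
rewrite inordK; last by move: (ltn_ord k); lia.
have [kb|kb] := eqVneq (k : nat) (mdeg b).+1.
  by rewrite kb /= !eqxx /lin_pair mulr_suml; apply: eq_bigr => j _; ring.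
rewrite ifF ?mulr0; last by apply/negbTE/eqP; lia.
by rewrite big1 // => j _; rewrite mulr0.
Qed.

Lemma shift_coef_space : (linfun shift_mx @: coef_space <= coef_space)%VS.
Proof.
rewrite limg_span; apply/span_subvP => _ /mapP [_ /mapP [b _ ->] ->].
by rewrite lfunE /= shift_coef_mx_in.
Qed.

Lemma coef_space_row0 i v : c i = 0 -> v \in coef_space -> row i v = 0.
Proof.
move=> ci; suff /subvP sub : (coef_space <= lker (linfun (row i)))%VS.
  by move/sub; rewrite memv_ker lfunE => /eqP.
apply/span_subvP => _ /mapP [b _ ->]; rewrite memv_ker lfunE /=; apply/eqP/rowP => k.
by rewrite !mxE ci mul0r; case: ifP.
Qed.

Hypothesis alpha_l : forall i, c i != 0 -> lin_pair alpha (l i) != 0.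

Lemma dim_coef_space_ker_shift :
  (\dim (coef_space :&: lker (linfun shift_mx)) <= #|[pred i | c i != 0%R]|)%N.
Proof.
set tops := [seq (delta_mx i ord_max : 'M[K]_(s, e.+1)) | i <- enum [pred i | c i != 0]].
apply: (leq_trans (dimvS (_ : _ <= <<tops>>)%VS)); last first.
  by apply: (leq_trans (dim_span _)); rewrite size_map -cardE.
apply/subvP => v; rewrite memv_cap memv_ker lfunE /= => /andP [vE /eqP v0].
have vik i k : c i != 0 -> (k < e)%N -> v i (inord k) = 0.
  move=> ci ke; have := congr1 (fun M : 'M[K]_(s, e.+1) => M i (inord k.+1)) v0.
  by rewrite !mxE inordK //= => /eqP; rewrite mulf_eq0 (negbTE (alpha_l ci)) => /eqP.
rewrite [v]matrix_sum_delta; apply: rpred_sum => i _; apply: rpred_sum => k _.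
have [ci|ci] := eqVneq (c i) 0.
  have := congr1 (fun M : 'rV[K]_e.+1 => M 0 k) (coef_space_row0 ci vE).
  by rewrite !mxE => ->; rewrite scale0r mem0v.
have [km|km] := eqVneq k ord_max.
  by rewrite km; apply/rpredZ/memv_span/map_f; rewrite mem_enum.
rewrite -(inord_val k) vik ?scale0r ?mem0v //.
by move: (ltn_ord k) km; rewrite -val_eqE /=; lia.
Qed.

Lemma al_waring_sum_le :
  (al waring_sum <= al (lin_act alpha waring_sum) + #|[pred i | c i != 0%R]|)%N.
Proof.
have -> : al waring_sum = \dim (linfun mx_pol @: coef_space).
  rewrite /al /coef_space limg_span -[in RHS]map_comp enumT; congr (\dim <<_>>).
  by apply: eq_map => b /=; rewrite lfunE /= dmono_waring_sum.
have -> : al (lin_act alpha waring_sum) =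
          \dim (linfun mx_pol @: (linfun shift_mx @: coef_space)).
  rewrite /al /coef_space !limg_span -![in RHS]map_comp enumT; congr (\dim <<_>>).
  by apply: eq_map => b /=; rewrite !lfunE /= dmono_lin_act_waring_sum.
apply: leq_trans (dim_limg_le_ker _ shift_coef_space) _.
by rewrite leq_add2l dim_coef_space_ker_shift.
Qed.

End ApolarLengthDrop.

Lemma waring_decomp_al_drop (K : fieldType) (charK0 : [pchar K] =i pred0)
    (n d : nat) (F : pol K n d) (alpha : 'I_n -> K) (r : nat) :
  waring_decomp F r ->
  (al F <= al (lin_act alpha F) + r)%N \/
  (al (lin_act alpha F) < al (lin_act alpha (lin_act alpha F)) + r)%N.
Proof.
move=> [c [l FE]].
have FH : F = waring_sum d d c l.
  by rewrite FE; apply: eq_bigr => i _; rewrite powp_linp.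
have [/existsP [i0 /andP [ci0 /eqP li0]] | /existsPn no_kill] :=
  boolP [exists i, (c i != 0) && (lin_pair alpha (l i) == 0)].
  right; pose c' i := c i * (d%:R * lin_pair alpha (l i)).
  have aF : lin_act alpha F = waring_sum d d.-1 c' l.
    rewrite FH /waring_sum linear_sum; apply: eq_bigr => i _.
    by rewrite linearZ /= lin_act_lpow // scalerA.
  have c'_lt : (#|[pred i | c' i != 0%R]| < r)%N.
    apply: leq_ltn_trans (_ : #|predC1 i0| < r)%N.
      apply/subset_leq_card/subsetP => i; rewrite !inE; apply: contraNN => /eqP ->.
      by rewrite /c' li0 !mulr0.
    by rewrite cardC1 card_ord prednK // (leq_ltn_trans (leq0n i0) (ltn_ord i0)).
  have alpha_l i : c' i != 0 -> lin_pair alpha (l i) != 0.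
    by apply: contraNN => /eqP pi0; rewrite /c' pi0 !mulr0.
  rewrite aF; apply: leq_ltn_trans (al_waring_sum_le charK0 (leq_pred d) alpha_l) _.
  by rewrite ltn_add2l.
have alpha_l i : c i != 0 -> lin_pair alpha (l i) != 0.
  by move=> ci; apply: contra (no_kill i) => pi; rewrite ci.
left; rewrite FH; apply: leq_trans (al_waring_sum_le charK0 (leqnn d) alpha_l) _.
by rewrite leq_add2l -[X in (_ <= X)%N]card_ord max_card.
Qed.

Theorem mainTheorem6 (K : closedFieldType) (charK0 : [pchar K] =i pred0)
  (n d : nat) (F : pol K n d) (hF : homogeneous F d) (alpha : 'I_n -> K) :
  (al F)%:Z - (al (lin_act alpha F))%:Z >
    (al (lin_act alpha F))%:Z - (al (lin_act alpha (lin_act alpha F)))%:Z ->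
  forall r : nat, waring_rank F r ->
  (al (lin_act alpha F))%:Z - (al (lin_act alpha (lin_act alpha F)))%:Z < r%:Z.
Proof.
move=> drop_gt r [/(waring_decomp_al_drop charK0 alpha) [] drop_le _]; lia.
Qed.
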